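(* Let $D$ be a regular $(v,k,\lambda,\mu)$-PDS in a finite group $G$ with $0<\mu<k$ and $\sqrt\Delta\in\mathbb{Z}$. Let $\mathcal{L}$ be the group of linear characters of $G$, $p$ a prime with $p\nmid\sqrt\Delta$, and $P$ a nontrivial Sylow $p$-subgroup of $\mathcal{L}$. Then for every nonprincipal $\xi'\in P$, \[\sum_{\xi\in P}\xi(D)=k+(|P|-1)\xi'(D).\] In particular all nonprincipal characters in $P$ take the same value on $D$.
   Context: A $(v,k,\lambda,\mu)$-PDS in a group $G$ of order $v$ is a $k$-subset $D$ such that every nonidentity element of $D$ is $xy^{-1}$ ($x,y\in D$) in exactly $\lambda$ ways and every nonidentity element of $G\setminus D$ in exactly $\mu$ ways; regular means $D=D^{(-1)}$ and $1\notin D$. $\Delta=(\lambda-\mu)^2+4(k-\mu)$; $\chi(D)=\sum_{d\in D}\chi(d)$. *)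

From mathcomp Require Import all_boot all_order all_algebra all_fingroup all_solvable all_field all_character.
Set Implicit Arguments. Unset Strict Implicit. Unset Printing Implicit Defensive.
Import Order.TTheory GRing.Theory Num.Theory.
Local Open Scope group_scope.
Local Open Scope ring_scope.

Definition pds_count (gT : finGroupType) (D : {set gT}) (g : gT) : nat :=
  #|[set u in setX D D | (u.1 * u.2^-1)%g == g]|.

Definition is_PDS (gT : finGroupType) (G : {group gT}) (D : {set gT})
    (v k lam mu : nat) : Prop :=
  [/\ D \subset G, #|G| = v, #|D| = k,
      (forall g, g \in D -> g != 1%g -> pds_count D g = lam) &
      (forall g, g \in G :\: D -> g != 1%g -> pds_count D g = mu)].

Definition regular_PDS (gT : finGroupType) (D : {set gT}) : Prop :=
  [set x^-1%g | x in D] = D /\ 1%g \notin D.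

Definition PDS_Delta (k lam mu : nat) : int :=
  ((lam%:Z - mu%:Z) ^+ 2 + 4 * (k%:Z - mu%:Z))%R.

Definition lin_chars (gT : finGroupType) (G : {group gT}) : {set Iirr G} :=
  [set i : Iirr G | 'chi[G]_i \is a linear_char].

(* P is a Sylow p-subgroup of the group of linear characters of G
   (group law: pointwise product of characters; identity: principal 'chi_0). *)
Definition sylow_lin_chars (gT : finGroupType) (G : {group gT}) (p : nat)
    (P : {set Iirr G}) : Prop :=
  [/\ P \subset lin_chars G,
      (0%R : Iirr G) \in P,
      (forall i j, i \in P -> j \in P ->
         exists2 l, l \in P & 'chi[G]_l = 'chi[G]_i * 'chi[G]_j) &
      #|P| = ((#|lin_chars G|)`_p)%N].

Definition chi_at (gT : finGroupType) (G : {group gT}) (i : Iirr G)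
    (D : {set gT}) : algC :=
  (\sum_(d in D) 'chi[G]_i d)%R.

From mathcomp Require Import all_boot all_order all_algebra all_fingroup all_solvable all_field all_character.
From mathcomp Require Import ring.
Import Order.TTheory GRing.Theory Num.Theory.
Set Implicit Arguments. Unset Strict Implicit. Unset Printing Implicit Defensive.
Local Open Scope ring_scope.

(* For a nonprincipal linear character xi, the PDS equations give
   xi(D)^2 = (k - mu) + (lam - mu) xi(D), so 2 xi(D) - (lam - mu) = +-sqrt Delta
   and xi(D) is a rational integer.  If xi lies in P then xi^|P| = 1 with |P| a
   power of p, so the Frobenius congruence in the algebraic integers gives
   xi(D) = xi(D)^|P| = sum_d xi(d)^|P| = k (mod p).  Two distinct roots of the
   quadratic differ by +-sqrt Delta, which p does not divide; hence all
   nonprincipal characters of P agree on D, and summing over P gives the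
   formula. *)

Lemma sumr_mul_natb (R : pzSemiRingType) (I : finType) (P : pred I) (F : I -> R) :
  \sum_i F i * (P i)%:R = \sum_(i | P i) F i.
Proof. by rewrite [RHS]big_mkcond; apply: eq_bigr => i _; rewrite mulr_natr mulrb. Qed.

Lemma eqAmodX (e a b : algC) n : a \in Aint -> b \in Aint ->
  (a == b %[mod e])%A -> (a ^+ n == b ^+ n %[mod e])%A.
Proof.
move=> Aa Ab Eab; elim: n => [|n IHn]; first by rewrite !expr0.
by rewrite !exprS; apply: eqAmodM; rewrite ?rpredX.
Qed.

Section FrobeniusModP.

Variable p : nat.
Hypothesis pr_p : prime p.

Lemma expr0_pexp e : (0 : algC) ^+ (p ^ e) = 0.
Proof. by rewrite expr0n eqn0Ngt expn_gt0 prime_gt0. Qed.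

Lemma eqAmod_exprDp (a b : algC) : a \in Aint -> b \in Aint ->
  ((a + b) ^+ p == a ^+ p + b ^+ p %[mod p%:R])%A.
Proof.
move=> Aa Ab; have := prime_gt1 pr_p; case: p pr_p => // n pr_n _.
rewrite exprDn big_ord_recr big_ord_recl /= subn0 subnn !expr0 bin0 binn.
rewrite !mulr1n mulr1 mul1r /eqAmod addrAC addrC addrK.
apply: rpred_sum => i _; rewrite -mulr_natr.
have /divnK <- : (n.+1 %| 'C(n.+1, bump 0 i))%N.
  by apply: prime_dvd_bin; rewrite //= /bump add1n ltnS ltn_ord.
by rewrite natrM mulrA -eqAmod0 eqAmodMl0 // ?rpredM ?rpredX ?rpred_nat.
Qed.

Lemma eqAmod_exprD_pexp (a b : algC) e : a \in Aint -> b \in Aint ->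
  ((a + b) ^+ (p ^ e) == a ^+ (p ^ e) + b ^+ (p ^ e) %[mod p%:R])%A.
Proof.
move=> Aa Ab; elim: e => [|e IHe]; first by rewrite !expr1.
rewrite expnSr !exprM.
apply: eqAmod_trans (eqAmodX p (rpredX _ (rpredD Aa Ab)) _ IHe) _.
  by rewrite rpredD ?rpredX.
by apply: eqAmod_exprDp; rewrite rpredX.
Qed.

Lemma eqAmod_sum_expr_pexp (I : Type) (r : seq I) (P : pred I) (F : I -> algC) e :
  (forall i, P i -> F i \in Aint) ->
  ((\sum_(i <- r | P i) F i) ^+ (p ^ e)
     == \sum_(i <- r | P i) F i ^+ (p ^ e) %[mod p%:R])%A.
Proof.
move=> AF; elim: r => [|x r IHr]; first by rewrite !big_nil expr0_pexp.
rewrite !big_cons; case: ifP => // Px.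
apply: eqAmod_trans (eqAmod_exprD_pexp e (AF x Px) _) _.
  by apply: rpred_sum.
by rewrite eqAmodDl.
Qed.

Lemma eqAmod_nat_expr_pexp (n : nat) e :
  ((n%:R : algC) ^+ (p ^ e) == n%:R %[mod p%:R])%A.
Proof.
elim: n => [|n IHn]; first by rewrite expr0_pexp.
rewrite mulrS; apply: eqAmod_trans (eqAmod_exprD_pexp e (rpred1 _) _) _.
  by rewrite rpred_nat.
by rewrite expr1n eqAmodDl.
Qed.

Lemma eqAmod_int_expr_pexp (x : algC) e : x \in Num.int ->
  (x ^+ (p ^ e) == x %[mod p%:R])%A.
Proof.
move=> /intrP[[n|n] ->]; first exact: eqAmod_nat_expr_pexp.
rewrite NegzE mulrNz pmulrn; set y : algC := n.+1%:R.
have Ay : y \in Aint by rewrite Aint_Cnat ?rpred_nat.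
have ANy : - y \in Aint by rewrite rpredN.
have Ny : ((- y) ^+ (p ^ e) == - y ^+ (p ^ e) %[mod p%:R])%A.
  have := eqAmod_exprD_pexp e Ay ANy.
  by rewrite subrr expr0_pexp /eqAmod sub0r rpredN opprK addrC.
by apply: eqAmod_trans Ny _; rewrite eqAmodN opprK; apply: eqAmod_nat_expr_pexp.
Qed.

End FrobeniusModP.

Section QuadraticRoots.

Variables (c : algC) (s : nat).
Hypothesis c_rat : c \in Crat.

Lemma quad_root_int x : x \in Aint -> (x *+ 2 - c) ^+ 2 = s%:R ^+ 2 ->
  x \in Num.int.
Proof.
move=> Ax; move/eqP; rewrite eqf_sqr => Ex; apply: Cint_rat_Aint => //.
have -> : x = (x *+ 2 - c + c) / 2.
  by rewrite subrK -[x *+ 2]mulr_natr mulfK ?pnatr_eq0.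
by case/orP: Ex => /eqP ->; rewrite rpred_div ?rpredD ?rpredN ?rpred_nat.
Qed.

Lemma quad_roots_eqAmod_eq p x y : prime p -> ~~ (p %| s)%N ->
  x \in Aint -> y \in Aint ->
  (x *+ 2 - c) ^+ 2 = s%:R ^+ 2 -> (y *+ 2 - c) ^+ 2 = s%:R ^+ 2 ->
  (x == y %[mod p%:R])%A -> x = y.
Proof.
move=> pr_p p_ndvd_s Ax Ay Ex Ey Exy.
have /orP[/eqP Exy2 | /eqP Exy2] : (x *+ 2 - c == y *+ 2 - c)
    || (x *+ 2 - c == - (y *+ 2 - c)) by rewrite -eqf_sqr Ex Ey.
  by apply/eqP; rewrite -(eqr_pMn2r (_ : 0 < 2)%N) // -(inj_eq (addIr (- c))) Exy2.
have Exy_sub : x *+ 2 - c = x - y.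
  have -> : x *+ 2 - c = x - y + (x *+ 2 - c + (y *+ 2 - c)) / 2.
    by field.
  by rewrite Exy2 addNr mul0r addr0.
have : ((x - y) ^+ 2 == 0 ^+ 2 %[mod p%:R])%A.
  by apply: eqAmodX; rewrite ?rpredB ?Aint0 // /eqAmod subr0.
rewrite -Exy_sub Ex expr0n -natrX eqAmod0_nat Euclid_dvdX //.
by rewrite andbT (negPf p_ndvd_s).
Qed.

End QuadraticRoots.

Section LinearCharacters.

Variables (gT : finGroupType) (G : {group gT}).

Lemma mem_lin_chars i : (i \in lin_chars G) = ('chi[G]_i \is a linear_char).
Proof. by rewrite inE. Qed.

Lemma Aint_chi_at (i : Iirr G) (D : {set gT}) : chi_at i D \in Aint.
Proof. by apply: rpred_sum => d _; apply: Aint_irr. Qed.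

Lemma sum_irr_eq0 i : i != 0 -> \sum_(g in G) 'chi[G]_i g = 0.
Proof.
move=> nz_i; have := cfdot_irr i 0; rewrite (negPf nz_i) cfdotE irr0 => /eqP.
rewrite mulf_eq0 invr_eq0 pnatr_eq0 eqn0Ngt cardG_gt0 /= => /eqP sum0.
by rewrite -[RHS]sum0; apply: eq_bigr => g Gg; rewrite cfun1E Gg conjC1 mulr1.
Qed.

Lemma chi_at0 (D : {set gT}) : D \subset G -> chi_at (0 : Iirr G) D = #|D|%:R.
Proof.
move=> sDG; rewrite /chi_at irr0 -sumr_const.
by apply: eq_bigr => d Dd; rewrite cfun1E (subsetP sDG).
Qed.

Lemma chi_at_mul_inv i (D : {set gT}) :
  'chi[G]_i \is a linear_char -> D \subset G ->
  chi_at i D * chi_at i [set x^-1 | x in D]%g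
    = \sum_g 'chi_i g *+ pds_count D g.
Proof.
move=> lin_i sDG; rewrite /chi_at big_imset /=; last by move=> x y _ _ /invg_inj.
rewrite big_distrl /=.
under eq_bigr do rewrite big_distrr /=.
rewrite pair_big /= (partition_big (fun u => u.1 * u.2^-1)%g xpredT) //=.
apply: eq_bigr => g _; rewrite /pds_count -sumr_const.
rewrite (eq_bigl (fun u => u \in [set u in setX D D | u.1 * u.2^-1 == g]%g)).
  apply: eq_bigr => -[x y]; rewrite !inE /= => /andP[/andP[Dx Dy] /eqP <-].
  by rewrite lin_charM ?groupV ?(subsetP sDG).
by move=> u; rewrite !inE.
Qed.

Section ClosedSet.

Variable P : {set Iirr G}.
Hypothesis sPL : P \subset lin_chars G.
Hypothesis mulP : forall i j, i \in P -> j \in P ->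
  exists2 l, l \in P & 'chi[G]_l = 'chi[G]_i * 'chi[G]_j.

(* Multiplication by 'chi_i permutes P, so the product of the values of P at g
   is unchanged when each factor is multiplied by 'chi_i g. *)
Lemma closed_lin_chars_expr_card i g : i \in P -> g \in G ->
  'chi[G]_i g ^+ #|P| = 1.
Proof.
move=> Pi Gg; have linP j : j \in P -> 'chi[G]_j \is a linear_char.
  by move=> Pj; rewrite -mem_lin_chars (subsetP sPL).
pose f j := cfIirr ('chi[G]_i * 'chi[G]_j).
have fP j : j \in P -> f j \in P /\ 'chi_(f j) = 'chi_i * 'chi_j.
  by move=> Pj; rewrite /f; have [l Pl <-] := mulP Pi Pj; rewrite irrK.
have f_inj : {in P &, injective f}.
  move=> j1 j2 Pj1 Pj2 Ef; apply: irr_inj.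
  apply: (mulrI (lin_char_unitr (linP i Pi))).
  by rewrite -(fP _ Pj1).2 -(fP _ Pj2).2 Ef.
have fPP : f @: P = P.
  apply/eqP; rewrite eqEcard card_in_imset // leqnn andbT.
  by apply/subsetP => _ /imsetP[j Pj ->]; apply: (fP j Pj).1.
have nz_prod : \prod_(j in P) 'chi[G]_j g != 0.
  by apply/prodf_neq0 => j Pj; exact: (lin_char_neq0 (linP j Pj) Gg).
apply: (mulIf nz_prod); rewrite mul1r -prodr_const -big_split /=.
rewrite -{2}fPP big_imset //=.
by apply: eq_bigr => j Pj; rewrite (fP j Pj).2 cfunE.
Qed.

End ClosedSet.

End LinearCharacters.

Lemma pds_count1 (gT : finGroupType) (D : {set gT}) : pds_count D 1%g = #|D|.
Proof.
have diag_inj : injective (fun x : gT => (x, x)) by move=> x y [].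
rewrite /pds_count -(card_imset D diag_inj); apply: eq_card => -[x y].
rewrite !inE /= -eq_mulgV1; apply/idP/imsetP.
  by case/andP=> /andP[Dx _] /eqP <-; exists x.
by case=> z Dz [-> ->]; rewrite Dz eqxx.
Qed.

Lemma pds_count_notin (gT : finGroupType) (G : {group gT}) (D : {set gT}) g :
  D \subset G -> g \notin G -> pds_count D g = 0%N.
Proof.
move=> sDG; apply: contraNeq; rewrite cards_eq0 => /set0Pn[[x y]].
rewrite !inE /= => /andP[/andP[Dx Dy] /eqP <-].
by rewrite groupM ?groupV ?(subsetP sDG).
Qed.

Lemma PDS_Delta_algC (s k lam mu : nat) : s%:Z ^+ 2 = PDS_Delta k lam mu ->
  (s%:R : algC) ^+ 2 = (lam%:R - mu%:R) ^+ 2 + 4 * (k%:R - mu%:R).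
Proof.
move/(congr1 (fun z : int => z%:~R : algC)).
by rewrite /PDS_Delta intrD !intrM !intrB !expr2 => E; exact: E.
Qed.

Section PartialDifferenceSet.

Variables (gT : finGroupType) (G : {group gT}) (D : {set gT}) (v k lam mu : nat).
Hypothesis pds : is_PDS G D v k lam mu.
Hypothesis reg : regular_PDS D.

Lemma pds_countE g : (pds_count D g)%:R =
  (g == 1%g)%:R * (k%:R - mu%:R) + (g \in D)%:R * (lam%:R - mu%:R)
    + (g \in G)%:R * mu%:R :> algC.
Proof.
have [sDG _ cardD countD countGD] := pds; have [_ D'1] := reg.
have [-> | nt_g] := eqVneq g 1%g.
  by rewrite pds_count1 cardD (negPf D'1) group1 !mul1r mul0r addr0 subrK.
rewrite !mul0r add0r; have [Dg | D'g] := boolP (g \in D).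
  by rewrite countD // (subsetP sDG) // !mul1r subrK.
have [Gg | G'g] := boolP (g \in G).
  by rewrite countGD ?inE ?D'g // mul0r add0r mul1r.
by rewrite (pds_count_notin sDG G'g) !mul0r addr0.
Qed.

Lemma pds_lin_char_quadratic i : i != 0 -> 'chi[G]_i \is a linear_char ->
  chi_at i D ^+ 2 = (k%:R - mu%:R) + (lam%:R - mu%:R) * chi_at i D.
Proof.
move=> nz_i lin_i; have [sDG _ _ _ _] := pds; have [invD _] := reg.
rewrite expr2 -{2}invD chi_at_mul_inv //.
under eq_bigr do rewrite -mulr_natr pds_countE 2!mulrDr !mulrA.
rewrite !big_split /= -!mulr_suml !sumr_mul_natb big_pred1_eq lin_char1 //.
by rewrite sum_irr_eq0 // mul0r addr0 mul1r mulrC.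
Qed.

Lemma pds_lin_char_discriminant s i : s%:Z ^+ 2 = PDS_Delta k lam mu ->
  i != 0 -> 'chi[G]_i \is a linear_char ->
  (chi_at i D *+ 2 - (lam%:R - mu%:R)) ^+ 2 = s%:R ^+ 2.
Proof.
move=> Delta_s nz_i lin_i; rewrite (PDS_Delta_algC Delta_s).
set x := chi_at i D; set c : algC := lam%:R - mu%:R.
transitivity (4 * (x ^+ 2 - c * x) + c ^+ 2); first by ring.
by rewrite pds_lin_char_quadratic // addrK addrC.
Qed.

Lemma pds_lin_char_int s i : s%:Z ^+ 2 = PDS_Delta k lam mu ->
  i != 0 -> 'chi[G]_i \is a linear_char -> chi_at i D \in Num.int.
Proof.
move=> Delta_s nz_i lin_i.
have Qc : lam%:R - mu%:R \in Crat by rewrite rpredB ?rpred_nat.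
by have := quad_root_int Qc (Aint_chi_at i D) (pds_lin_char_discriminant Delta_s nz_i lin_i).
Qed.

End PartialDifferenceSet.

Lemma chi_at_sylow_eqAmod_card (gT : finGroupType) (G : {group gT}) p
    (P : {set Iirr G}) i (D : {set gT}) :
  prime p -> sylow_lin_chars p P -> i \in P -> D \subset G ->
  chi_at i D \in Num.int -> (chi_at i D == #|D|%:R %[mod p%:R])%A.
Proof.
move=> pr_p [sPL _ mulP cardP] Pi sDG x_int.
have cardP_pexp : #|P| = (p ^ logn p #|lin_chars G|)%N by rewrite cardP p_part.
apply: (@eqAmod_trans _ (chi_at i D ^+ #|P|)).
  by rewrite eqAmod_sym cardP_pexp eqAmod_int_expr_pexp.
rewrite cardP_pexp.
apply: eqAmod_trans (eqAmod_sum_expr_pexp pr_p _ _ (fun d _ => Aint_irr i d)) _.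
rewrite -cardP_pexp (eq_bigr (fun=> 1)) ?sumr_const // => d Dd.
exact: (closed_lin_chars_expr_card sPL mulP Pi (subsetP sDG d Dd)).
Qed.

Theorem mainTheorem5 (gT : finGroupType) (G : {group gT}) (D : {set gT})
    (v k lam mu : nat) (s p : nat) (P : {set Iirr G}) :
  is_PDS G D v k lam mu ->
  regular_PDS D ->
  (0 < mu < k)%N ->
  (s%:Z ^+ 2)%R = PDS_Delta k lam mu ->
  prime p ->
  ~~ (p %| s)%N ->
  sylow_lin_chars p P ->
  (1 < #|P|)%N ->
  (forall i', i' \in P -> i' != 0%R ->
     (\sum_(i in P) chi_at i D)%R = (k%:R + (#|P| - 1)%:R * chi_at i' D)%R)
  /\ (forall i j, i \in P -> j \in P -> i != 0%R -> j != 0%R ->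
        chi_at i D = chi_at j D).
Proof.
move=> pds reg _ Delta_s pr_p p_ndvd_s sylP _.
have [sDG _ cardD _ _] := pds; have [sPL P0 _ _] := sylP.
have lin j : j \in P -> 'chi[G]_j \is a linear_char.
  by move=> Pj; rewrite -mem_lin_chars (subsetP sPL).
have disc j (Pj : j \in P) (nz_j : j != 0) :=
  pds_lin_char_discriminant pds reg Delta_s nz_j (lin j Pj).
have chi_at_k j : j \in P -> j != 0 -> (chi_at j D == k%:R %[mod p%:R])%A.
  move=> Pj nz_j; rewrite -cardD.
  apply: (chi_at_sylow_eqAmod_card pr_p sylP Pj sDG).
  exact: (pds_lin_char_int pds reg Delta_s nz_j (lin j Pj)).
have chi_at_const i j : i \in P -> j \in P -> i != 0 -> j != 0 ->
    chi_at i D = chi_at j D.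
  move=> Pi Pj nz_i nz_j; apply: quad_roots_eqAmod_eq pr_p p_ndvd_s _ _
    (disc i Pi nz_i) (disc j Pj nz_j) _; rewrite ?Aint_chi_at //.
  by apply: eqAmod_trans (chi_at_k i Pi nz_i) _; rewrite eqAmod_sym chi_at_k.
split=> // i' Pi' nz_i'; rewrite (bigD1 0) //= chi_at0 // cardD.
rewrite (eq_bigr (fun=> chi_at i' D)) => [|j /andP[Pj nz_j]]; last exact: chi_at_const.
rewrite sumr_const mulr_natl (cardsD1 0 P) P0 add1n subn1 /=.
by congr (_ + _ *+ _); apply: eq_card => j; rewrite !inE andbC.
Qed.
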